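(* Let $S$ and $T$ be ordered forests, let $A$ be a non-empty finite linear order, and let $i\colon S\to T$ be a tree embedding. Then there exists an $A$-rigid surjection $s\colon A\oplus T\to A\oplus S$ such that the restriction to $S$ of the injection of $s$ is equal to $i$.
   Context: A tree is a finite, non-empty poset with a smallest element (root) in which the predecessors of each element form a chain. An ordered tree has a linear order on the immediate successors of each node, inducing the lexicographic order $\leq$ ($v\leq w$ if $v\sqsubseteq w$; for incomparable $v,w$, compare the immediate successors of $v\wedge w$ lying below $v$ and $w$). A forest is a finite poset in which the predecessors of each element form a chain; $1\oplus T$ is the tree obtained by adding a new root below everything. An ordered forest is a forest $T$ with a linear order $\leq_T$ that is the restriction of the lexicographic order of some ordered-tree structure on $1\oplus T$. A tree embedding $S\to T$ of ordered forests is a function extending to an embedding $1\oplus S\to 1\oplus T$. For a non-empty linear order $A$ and an ordered forest $T$, $A\oplus T$ is the ordered tree obtained by placing $T$ above $\max A$ (minimal elements of $T$ become immediate successors of $\max A$), with linear order putting $T$ after $A$. A morphism $e$ of ordered trees preserves $\wedge$, is $\leq$-monotone and maps root to root; an embedding is an injective morphism. A rigid surjection $f\colon T\to S$ is a function for which there is a morphism $e\colon S\to T$ (its injection) with $f\circ e={\rm id}_S$ and $e(f(w))\sqsubseteq_T w$ for all $w$. An $A$-rigid surjection $t\colon A\oplus T\to A\oplus S$ is a rigid surjection with $t\upharpoonright A={\rm id}_A$. *)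

From mathcomp Require Import all_boot.
Set Implicit Arguments.
Unset Strict Implicit.
Unset Printing Implicit Defensive.

Section Defs.
Variable X : Type.
Implicit Types (le sib lex : X -> X -> Prop).

Definition poset le :=
  [/\ (forall x, le x x),
      (forall x y, le x y -> le y x -> x = y) &
      (forall x y z, le x y -> le y z -> le x z)].

Definition linear_order le :=
  poset le /\ (forall x y, le x y \/ le y x).

Definition forest le :=
  poset le /\ (forall x y z, le y x -> le z x -> le y z \/ le z y).

Definition is_root le r := forall x, le r x.

Definition tree le := forest le /\ exists r, is_root le r.

Definition immsucc le v w :=
  [/\ le v w, v <> w & forall u, le v u -> le u w -> u = v \/ u = w].

Definition is_meet le m v w :=
  [/\ le m v, le m w & forall u, le u v -> le u w -> le u m].

Definition sibling_order le sib :=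
  forall v,
  [/\ (forall w, immsucc le v w -> sib w w),
      (forall w1 w2, immsucc le v w1 -> immsucc le v w2 ->
          sib w1 w2 -> sib w2 w1 -> w1 = w2),
      (forall w1 w2 w3, immsucc le v w1 -> immsucc le v w2 -> immsucc le v w3 ->
          sib w1 w2 -> sib w2 w3 -> sib w1 w3) &
      (forall w1 w2, immsucc le v w1 -> immsucc le v w2 -> sib w1 w2 \/ sib w2 w1)].

Definition ordered_tree le sib := tree le /\ sibling_order le sib.

Definition lexico le sib v w :=
  le v w \/
  (~ le v w /\ ~ le w v /\
   exists m v' w', is_meet le m v w /\ immsucc le m v' /\ immsucc le m w' /\
                   le v' v /\ le w' w /\ sib v' w').
End Defs.

(* 1 (+) T : a new root (None) below everything *)
Definition oplus1_le (T : Type) (le : T -> T -> Prop) (x y : option T) : Prop :=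
  match x, y with
  | None, _ => True
  | Some _, None => False
  | Some a, Some b => le a b
  end.

Definition ordered_forest (T : Type) (le lin : T -> T -> Prop) :=
  forest le /\
  exists sib : option T -> option T -> Prop,
    ordered_tree (oplus1_le le) sib /\
    forall x y, lin x y <-> lexico (oplus1_le le) sib (Some x) (Some y).

(* morphism of ordered trees, each given by its tree order and its
   lexicographic order: preserves meets, is monotone for the lexicographic
   order, and maps root to root *)
Definition otree_morphism (X Y : Type) (leX lexX : X -> X -> Prop)
  (leY lexY : Y -> Y -> Prop) (f : X -> Y) :=
  [/\ (forall m v w, is_meet leX m v w -> is_meet leY (f m) (f v) (f w)),
      (forall v w, lexX v w -> lexY (f v) (f w)) &
      (forall r, is_root leX r -> is_root leY (f r))].

Definition otree_embedding (X Y : Type) (leX lexX : X -> X -> Prop)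
  (leY lexY : Y -> Y -> Prop) (f : X -> Y) :=
  otree_morphism leX lexX leY lexY f /\ injective f.

(* tree embedding of ordered forests S -> T: extends to an embedding of
   ordered trees 1 (+) S -> 1 (+) T (the lexicographic order of 1 (+) S is
   oplus1_le linS, since the new root is below everything) *)
Definition tree_embedding (S T : Type) (leS linS : S -> S -> Prop)
  (leT linT : T -> T -> Prop) (i : S -> T) :=
  exists j : option S -> option T,
    otree_embedding (oplus1_le leS) (oplus1_le linS)
                    (oplus1_le leT) (oplus1_le linT) j /\
    forall x, j (Some x) = Some (i x).

(* A (+) T : T placed above max A; used both for the tree order (with leA, leT)
   and for the linear order (with leA, linT): A first, then T *)
Definition oplusA (A T : Type) (rA : A -> A -> Prop) (rT : T -> T -> Prop)
  (x y : A + T) : Prop :=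
  match x, y with
  | inl a, inl b => rA a b
  | inl _, inr _ => True
  | inr _, inl _ => False
  | inr t, inr u => rT t u
  end.

Definition rigid_injection (X Y : Type) (leX lexX : X -> X -> Prop)
  (leY lexY : Y -> Y -> Prop) (f : X -> Y) (e : Y -> X) :=
  [/\ otree_morphism leY lexY leX lexX e,
      (forall y, f (e y) = y) &
      (forall w, leX (e (f w)) w)].

Definition rigid_surjection (X Y : Type) (leX lexX : X -> X -> Prop)
  (leY lexY : Y -> Y -> Prop) (f : X -> Y) :=
  exists e, rigid_injection leX lexX leY lexY f e.

From mathcomp Require Import all_boot.
From Stdlib Require Import ClassicalEpsilon.

Set Implicit Arguments.
Unset Strict Implicit.
Unset Printing Implicit Defensive.

(* Take the injection to be the identity on A and i on S.  It is a morphism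
   because the extension of i to 1 (+) S -> 1 (+) T sends the new root to the
   new root, so a meet in A (+) S lying in A is still a meet in A (+) T.  The
   rigid surjection sends t in T to the x whose image i x is largest among the
   images below t, when there is one, and every other node to a fixed element
   of A, which lies below all of T in A (+) T. *)

Definition lift_right (A S T : Type) (i : S -> T) (y : A + S) : A + T :=
  match y with inl a => inl a | inr x => inr (i x) end.

Section TreeEmbedding.
Variables (S T : Type) (leS linS : S -> S -> Prop) (leT linT : T -> T -> Prop).
Variables (i : S -> T) (j : option S -> option T).
Hypothesis j_emb : otree_embedding (oplus1_le leS) (oplus1_le linS)
                                   (oplus1_le leT) (oplus1_le linT) j.
Hypothesis j_Some : forall x, j (Some x) = Some (i x).

Lemma tree_embedding_inj : injective i.
Proof.
move=> x y ixy; have : j (Some x) = j (Some y) by rewrite !j_Some ixy.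
by case: j_emb => _ /[apply] -[].
Qed.

Lemma tree_embedding_None : j None = None.
Proof.
case: j_emb => -[_ _ jroot] _; have := jroot None (fun _ => I).
by case: (j None) => // t /(_ None).
Qed.

Section OplusA.
Variables (A : Type) (leA : A -> A -> Prop).

Lemma lift_right_meet m v w :
  is_meet (oplusA leA leS) m v w ->
  is_meet (oplusA leA leT) (lift_right i m) (lift_right i v) (lift_right i w).
Proof.
case: j_emb => -[jmeet _ _] _.
case: m => [c|z]; case: v => [a|x]; case: w => [b|y] //= [mv mw m_max];
  try by split => //= -[u|u] //=; apply: (m_max (inl u)).
- have meetS : is_meet (oplus1_le leS) None (Some x) (Some y).
    by split => // -[u|] //= ux uy; apply: (m_max (inr u)).
  have := jmeet _ _ _ meetS; rewrite tree_embedding_None !j_Some => -[_ _ None_max].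
  split => //= -[u|u] /=; first exact: (m_max (inl u)).
  by move=> ux uy; apply: (None_max (Some u)).
- have meetS : is_meet (oplus1_le leS) (Some z) (Some x) (Some y).
    by split => // -[u|] //= ux uy; apply: (m_max (inr u)).
  have := jmeet _ _ _ meetS; rewrite !j_Some => -[zx zy z_max].
  by split => // -[u|u] //= ux uy; apply: (z_max (Some u)).
Qed.

Lemma lift_right_morphism : inhabited A ->
  otree_morphism (oplusA leA leS) (oplusA leA linS)
                 (oplusA leA leT) (oplusA leA linT) (lift_right i).
Proof.
move=> [a0]; case: j_emb => -[_ jlex _] _; split.
- exact: lift_right_meet.
- move=> [a|x] [b|y] //= xy.
  by have := jlex (Some x) (Some y) xy; rewrite !j_Some.
- move=> [r|z] r_root /=; last by have := r_root (inl a0).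
  by move=> [b|y] //=; apply: (r_root (inl b)).
Qed.

End OplusA.
End TreeEmbedding.

Section Retraction.
Variables (A S T : Type) (leA : A -> A -> Prop) (leT : T -> T -> Prop).
Variables (i : S -> T) (a0 : A).
Hypothesis leA_refl : forall a, leA a a.
Hypothesis leT_poset : poset leT.
Hypothesis i_inj : injective i.

Definition largest_image_below (t : T) (x : S) :=
  leT (i x) t /\ forall x', leT (i x') t -> leT (i x') (i x).

Definition retract (w : A + T) : A + S :=
  match w with
  | inl a => inl a
  | inr t => match excluded_middle_informative (exists x, largest_image_below t x) with
             | left ex_x => inr (proj1_sig (constructive_indefinite_description _ ex_x))
             | right _ => inl a0
             end
  end.

Lemma retract_lift_right y : retract (lift_right i y) = y.
Proof.
case: leT_poset => leT_refl leT_anti _.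
case: y => [a|x] //=; case: excluded_middle_informative => [ex_x|no_x]; last first.
  by case: no_x; exists x; split=> [|//]; apply: leT_refl.
case: constructive_indefinite_description => x' [ix'x x'_max] /=.
by congr inr; apply/i_inj/leT_anti/x'_max/leT_refl.
Qed.

Lemma lift_right_retract_le w : oplusA leA leT (lift_right i (retract w)) w.
Proof.
case: w => [a|t] /=; first exact: leA_refl.
case: excluded_middle_informative => [ex_x|//].
by case: constructive_indefinite_description => x [].
Qed.

End Retraction.

Theorem lemma4p10 (S T A : finType)
  (leS linS : S -> S -> Prop) (leT linT : T -> T -> Prop) (leA : A -> A -> Prop)
  (i : S -> T) :
  ordered_forest leS linS ->
  ordered_forest leT linT ->
  linear_order leA ->
  inhabited A ->
  tree_embedding leS linS leT linT i ->
  exists (s : A + T -> A + S) (e : A + S -> A + T),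
    [/\ rigid_injection (oplusA leA leT) (oplusA leA linT)
                        (oplusA leA leS) (oplusA leA linS) s e,
        (forall a : A, s (inl a) = inl a) &
        (forall x : S, e (inr x) = inr (i x))].
Proof.
move=> _ [[leT_poset _] _] [[leA_refl _ _] _] [a0] [j [j_emb j_Some]].
have i_inj := tree_embedding_inj j_emb j_Some.
exists (retract leT i a0), (lift_right i); split => //; split.
- exact: (lift_right_morphism j_emb j_Some _ (inhabits a0)).
- exact: retract_lift_right.
- exact: lift_right_retract_le.
Qed.
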